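(* Let $G$ be a torsion-free group and $\mathcal F\subset\mathcal P_G$ a left-invariant ideal. Then for every limit ordinal $\alpha$ (including $\alpha=0$) the family $\tau^{<\alpha}(\mathcal F)$ is additive. In particular, the thin-completion $\tau^*(\mathcal F)$ is a (left-invariant) ideal in $\mathcal P_G$.
   Context: $\mathcal P_G$ is the family of all subsets of $G$; $e$ is the neutral element. A family $\mathcal F\subset\mathcal P_G$ is left-invariant if $xF\in\mathcal F$ for all $F\in\mathcal F$, $x\in G$; lower if $A\subset B\in\mathcal F$ implies $A\in\mathcal F$; additive if $A\cup B\in\mathcal F$ for all $A,B\in\mathcal F$; an ideal if it is lower and additive. For a left-invariant lower family $\mathcal F$: $\tau(\mathcal F)=\{A\subset G: xA\cap yA\in\mathcal F$ for all distinct $x,y\in G\}$; $\tau^0(\mathcal F)=\mathcal F$, $\tau^{<\alpha}(\mathcal F)=\bigcup_{\beta<\alpha}\tau^\beta(\mathcal F)$ and $\tau^\alpha(\mathcal F)=\tau(\tau^{<\alpha}(\mathcal F))$ for $\alpha>0$. $\mathcal F$ is thin-complete if $\tau(\mathcal F)=\mathcal F$; the thin-completion $\tau^*(\mathcal F)$ is the smallest thin-complete family containing $\mathcal F$; it equals $\bigcup_{\alpha<|G|^+}\tau^\alpha(\mathcal F)$. A group is torsion-free if every non-neutral element has infinite order. *)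

From Stdlib Require Import Arith.

Record group := Group {
  carrier :> Type;
  gmul : carrier -> carrier -> carrier;
  gone : carrier;
  ginv : carrier -> carrier;
  gmulA : forall x y z, gmul x (gmul y z) = gmul (gmul x y) z;
  gmul1l : forall x, gmul gone x = x;
  gmul1r : forall x, gmul x gone = x;
  gmulVl : forall x, gmul (ginv x) x = gone;
  gmulVr : forall x, gmul x (ginv x) = gone
}.

Section Defs.
Variable G : group.

Fixpoint gpow (g : G) (n : nat) : G :=
  match n with O => gone G | S m => gmul G g (gpow g m) end.

Definition torsion_free : Prop :=
  forall g : G, g <> gone G -> forall n : nat, 0 < n -> gpow g n <> gone G.

Definition subset_ (A B : G -> Prop) : Prop := forall z, A z -> B z.
Definition family := (G -> Prop) -> Prop.

Definition ltrans (x : G) (A : G -> Prop) : G -> Prop :=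
  fun z => exists a, A a /\ z = gmul G x a.
Definition inter (A B : G -> Prop) : G -> Prop := fun z => A z /\ B z.
Definition union (A B : G -> Prop) : G -> Prop := fun z => A z \/ B z.

Definition left_invariant (F : family) : Prop :=
  forall A x, F A -> F (ltrans x A).
Definition lower (F : family) : Prop :=
  forall A B, subset_ A B -> F B -> F A.
Definition additive (F : family) : Prop :=
  forall A B, F A -> F B -> F (union A B).
Definition ideal (F : family) : Prop := lower F /\ additive F.

Definition tau (F : family) : family :=
  fun A => forall x y : G, x <> y -> F (inter (ltrans x A) (ltrans y A)).

Definition thin_complete (F : family) : Prop := forall A, tau F A <-> F A.

Definition tau_star (F : family) : family :=
  fun A => forall T : family, left_invariant T -> lower T -> thin_complete T ->
    (forall B, F B -> T B) -> T A.

(* Transfinite hierarchy indexed by a well-order (W, lt): the element w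
   stands for the ordinal alpha = order type of {v | lt v w}.
   tau^alpha = F if alpha = 0, tau(tau^{<alpha}) otherwise. *)
Section Hierarchy.
Variable F : family.
Variables (W : Type) (lt : W -> W -> Prop).

Definition minimal (w : W) : Prop := forall v, ~ lt v w.

Inductive tau_at (w : W) (A : G -> Prop) : Prop :=
| tau_at_zero : minimal w -> F A -> tau_at w A
| tau_at_succ : ~ minimal w ->
    (forall x y : G, x <> y ->
       exists v, lt v w /\ tau_at v (inter (ltrans x A) (ltrans y A))) ->
    tau_at w A.

Definition tau_lt (w : W) : family := fun A => exists v, lt v w /\ tau_at v A.
End Hierarchy.
End Defs.

Definition well_order {W : Type} (lt : W -> W -> Prop) : Prop :=
  (forall x, ~ lt x x) /\
  (forall x y z, lt x y -> lt y z -> lt x z) /\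
  (forall x y, lt x y \/ x = y \/ lt y x) /\
  well_founded lt.

Definition is_limit {W : Type} (lt : W -> W -> Prop) (w : W) : Prop :=
  forall v, lt v w -> exists u, lt v u /\ lt u w.

From Stdlib Require Import List Arith Lia Classical FinFun.
Import ListNotations.

(* Iterating tau finitely often makes an ideal H "eventually additive": if
   A, B lie in tau^n(H), then A ∪ B lies in tau^m(H) for some m.  More
   generally, let C be a union of K members of tau^(i+1)(H) and write C_S for
   the intersection of the translates gC, g ∈ S.  For x ≠ y, the set
   xC_S ∩ yC_S contains C_(xS ∪ yS), and xS ∪ yS is strictly larger than a
   finite S: otherwise S would be invariant under left multiplication by
   x^-1 y ≠ 1, giving a finite orbit, which torsion-freeness forbids.  So
   C = C_{1} lies in tau^K of the family of all C_S with |S| = K+1, and by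
   pigeonhole such a C_S is covered by boundedly many sets aA ∩ bA (a ≠ b,
   A one of the K sets), which lie in tau^i(H); induction on i concludes.

   Transfinitely, every stage X is sandwiched by an ideal H: X ⊆ tau^n(H)
   and tau^m(H) ⊆ tau^m(X) for all m.  A directed union of sandwiched
   families that is cofinal under tau is then additive; this handles the
   limit stages of the hierarchy, and also the thin-completion, which is the
   union of the tower generated from F by tau and by unions. *)

Section Pairs.
Context {T : Type}.

Fixpoint pairs_lt (l : list T) : list (T * T) :=
  match l with [] => [] | a :: r => map (fun b => (a, b)) r ++ pairs_lt r end.

Lemma pairs_lt_neq (l : list T) a b : NoDup l -> In (a, b) (pairs_lt l) -> a <> b.
Proof.
  induction l as [|c r IH]; simpl; [tauto|]. intros Hnd Hin. inversion Hnd; subst.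
  apply in_app_or in Hin. destruct Hin as [Hin|Hin]; [|auto].
  apply in_map_iff in Hin. destruct Hin as [b' [E Hb]]. inversion E; subst.
  intros ->; auto.
Qed.

Lemma length_pairs_lt (l : list T) : length (pairs_lt l) <= length l * length l.
Proof. induction l as [|c r IH]; simpl; auto. rewrite length_app, length_map. nia. Qed.

Lemma pigeonhole_pairs_lt {C : Type} (R : T -> C -> Prop) (d : list T) (L : list C) :
  length L < length d -> (forall g, In g d -> exists c, In c L /\ R g c) ->
  exists a b c, In (a, b) (pairs_lt d) /\ In c L /\ R a c /\ R b c.
Proof.
  revert L. induction d as [|a r IH]; intros L Hl Hc; simpl in Hl; [lia|].
  destruct (Hc a (or_introl eq_refl)) as [c0 [Hc0 Ra]].
  destruct (classic (exists b, In b r /\ R b c0)) as [[b [Hb Rb]]|Hno].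
  - exists a, b, c0. repeat split; auto. simpl. apply in_or_app. left. now apply in_map.
  - apply in_split in Hc0. destruct Hc0 as [l1 [l2 ->]].
    destruct (IH (l1 ++ l2)) as [a' [b' [c [H1 [H2 [H3 H4]]]]]].
    + rewrite length_app in *. simpl in Hl. lia.
    + intros g Hg. destruct (Hc g (or_intror Hg)) as [c [Hin Rg]].
      exists c. split; auto. apply in_app_or in Hin. apply in_or_app.
      destruct Hin as [Hin|[<-|Hin]]; auto. exfalso. eauto.
    + exists a', b', c. repeat split; auto.
      * simpl. apply in_or_app. now right.
      * apply in_or_app. apply in_app_or in H2. simpl. tauto.
Qed.

End Pairs.

Lemma length_flat_map_le {A B : Type} (f : A -> list B) l c :
  (forall a, length (f a) <= c) -> length (flat_map f l) <= length l * c.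
Proof. intro H. induction l; simpl; auto. rewrite length_app. specialize (H a). lia. Qed.

Section Group.
Variable G : group.

Local Infix "⋅" := (gmul G) (at level 40, left associativity).

Lemma gmul_cancel_l (x a b : G) : x ⋅ a = x ⋅ b -> a = b.
Proof.
  intro E. rewrite <- (gmul1l G a), <- (gmul1l G b), <- (gmulVl G x), <- !gmulA.
  now rewrite E.
Qed.

Lemma gmul_cancel_r (x a b : G) : a ⋅ x = b ⋅ x -> a = b.
Proof.
  intro E. rewrite <- (gmul1r G a), <- (gmul1r G b), <- (gmulVr G x), !gmulA.
  now rewrite E.
Qed.

Lemma ltrans_ltrans_subset (x z : G) A :
  subset_ G (ltrans G x (ltrans G z A)) (ltrans G (x ⋅ z) A).
Proof. intros w [a [[b [Hb ->]] ->]]. exists b. split; auto. apply gmulA. Qed.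

Lemma ltrans_subset (x : G) A B : subset_ G A B -> subset_ G (ltrans G x A) (ltrans G x B).
Proof. intros H w [a [Ha ->]]. exists a; auto. Qed.

Lemma inter_subset (A B C D : G -> Prop) :
  subset_ G A C -> subset_ G B D -> subset_ G (inter G A B) (inter G C D).
Proof. intros H1 H2 w [a b]. split; auto. Qed.

Definition fsubset (X Y : family G) : Prop := forall A, X A -> Y A.

Definition bigcup_fam {I : Type} (D : I -> Prop) (Xs : I -> family G) : family G :=
  fun A => exists i, D i /\ Xs i A.

Lemma bigcup_fam_lower {I : Type} (D : I -> Prop) (Xs : I -> family G) :
  (forall i, D i -> lower G (Xs i)) -> lower G (bigcup_fam D Xs).
Proof. intros H A B HAB [i [Hi HB]]. exists i. split; auto. eapply H; eauto. Qed.

Lemma bigcup_fam_left_invariant {I : Type} (D : I -> Prop) (Xs : I -> family G) :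
  (forall i, D i -> left_invariant G (Xs i)) -> left_invariant G (bigcup_fam D Xs).
Proof. intros H A z [i [Hi HA]]. exists i. split; [|apply H]; auto. Qed.

Lemma tau_fsubset X Y : fsubset X Y -> fsubset (tau G X) (tau G Y).
Proof. intros H A HA x y Hxy. apply H, HA, Hxy. Qed.

Lemma tau_lower X : lower G X -> lower G (tau G X).
Proof.
  intros HX A B HAB HB x y Hxy. eapply HX; [|apply HB, Hxy].
  apply inter_subset; apply ltrans_subset; auto.
Qed.

(* No invariance of X is needed: (xz)A ∩ (yz)A contains x(zA) ∩ y(zA). *)
Lemma tau_left_invariant X : lower G X -> left_invariant G (tau G X).
Proof.
  intros HX A z HA x y Hxy.
  assert (Hn : x ⋅ z <> y ⋅ z) by (intro E; apply Hxy; eapply gmul_cancel_r; eauto).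
  eapply HX; [|apply (HA _ _ Hn)]. apply inter_subset; apply ltrans_ltrans_subset.
Qed.

Lemma fsubset_tau X : lower G X -> left_invariant G X -> fsubset X (tau G X).
Proof.
  intros Hl Hi A HA x y _. eapply Hl; [|apply (Hi A x HA)]. intros w [a b]; auto.
Qed.

Lemma tau_star_left_invariant F : left_invariant G (tau_star G F).
Proof. intros A x HA T Ti Tl Tc HT. exact (Ti A x (HA T Ti Tl Tc HT)). Qed.

Lemma tau_star_lower F : lower G (tau_star G F).
Proof. intros A B HAB HB T Ti Tl Tc HT. exact (Tl A B HAB (HB T Ti Tl Tc HT)). Qed.

Fixpoint tau_iter (n : nat) (X : family G) : family G :=
  match n with O => X | S n => tau G (tau_iter n X) end.

Lemma tau_iter_lower n X : lower G X -> lower G (tau_iter n X).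
Proof. intro H; induction n; simpl; auto using tau_lower. Qed.

Lemma tau_iter_fsubset n X Y : fsubset X Y -> fsubset (tau_iter n X) (tau_iter n Y).
Proof. intro H; induction n; simpl; auto using tau_fsubset. Qed.

Lemma tau_iter_add a b X : tau_iter (a + b) X = tau_iter a (tau_iter b X).
Proof. induction a; simpl; congruence. Qed.

Lemma gpow_add z a b : gpow G z (a + b) = gpow G z a ⋅ gpow G z b.
Proof. induction a; simpl; [now rewrite gmul1l|]. rewrite IHa. apply gmulA. Qed.

Section TorsionFree.
Hypothesis HG : torsion_free G.

Lemma gpow_injective z : z <> gone G -> Injective (gpow G z).
Proof.
  intro Hz.
  assert (Hlt : forall i j, i < j -> gpow G z i <> gpow G z j).
  { intros i j Hij E. apply (HG z Hz (j - i)); [lia|].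
    apply (gmul_cancel_l (gpow G z i)). rewrite <- gpow_add, gmul1r.
    replace (i + (j - i)) with j by lia. now symmetry. }
  intros i j E. destruct (Nat.lt_total i j) as [H|[H|H]]; auto; exfalso.
  - exact (Hlt i j H E).
  - exact (Hlt j i H (eq_sym E)).
Qed.

Lemma no_finite_orbit z (d : list G) :
  z <> gone G -> d <> [] -> (forall e, In e d -> In (z ⋅ e) d) -> False.
Proof.
  intros Hz Hd Hcl. destruct d as [|e d']; [congruence|].
  set (orbit := map (fun i => gpow G z i ⋅ e) (seq 0 (S (length (e :: d'))))).
  assert (Hnd : NoDup orbit).
  { apply Injective_map_NoDup; [|apply seq_NoDup].
    intros i j E. apply (gpow_injective z Hz), (gmul_cancel_r e), E. }
  assert (Hincl : incl orbit (e :: d')).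
  { intros w Hw. apply in_map_iff in Hw. destruct Hw as [i [<- _]].
    induction i; simpl.
    - rewrite gmul1l. now left.
    - rewrite <- gmulA. apply Hcl, IHi. }
  apply NoDup_incl_length in Hincl; auto.
  unfold orbit in Hincl. rewrite length_map, length_seq in Hincl. simpl in Hincl. lia.
Qed.

Definition has_distinct (n : nat) (l : list G) : Prop :=
  exists d, NoDup d /\ incl d l /\ length d = n.

Lemma has_distinct_double n l x y :
  1 <= n -> x <> y -> has_distinct n l ->
  has_distinct (S n) (map (gmul G x) l ++ map (gmul G y) l).
Proof.
  intros Hn Hxy [d [Hnd [Hinc Hlen]]].
  destruct (classic (exists e, In e d /\ ~ In (y ⋅ e) (map (gmul G x) d)))
    as [[e [He Hne]]|Hall].
  - exists (y ⋅ e :: map (gmul G x) d). split; [|split].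
    + constructor; auto. apply Injective_map_NoDup; auto. intros a b; apply gmul_cancel_l.
    + intros w [<-|Hw]; apply in_or_app; [right; now apply in_map, Hinc|left].
      apply in_map_iff in Hw. destruct Hw as [a [<- Ha]]. now apply in_map, Hinc.
    + simpl. now rewrite length_map, Hlen.
  - exfalso. apply (no_finite_orbit (ginv G x ⋅ y) d).
    + intro E. apply Hxy. rewrite <- (gmul1l G y), <- (gmulVr G x), <- gmulA, E, gmul1r.
      reflexivity.
    + intros ->. simpl in Hlen. lia.
    + intros e He. destruct (classic (In (y ⋅ e) (map (gmul G x) d))) as [Hi|Hi];
        [|exfalso; eauto].
      apply in_map_iff in Hi. destruct Hi as [a [Ea Ha]].
      rewrite <- gmulA, <- Ea, gmulA, gmulVl, gmul1l. exact Ha.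
Qed.

Definition cap_translates (C : G -> Prop) (l : list G) : G -> Prop :=
  fun z => forall g, In g l -> ltrans G g C z.

Lemma inter_ltrans_cap_translates C l x y :
  subset_ G (inter G (ltrans G x (cap_translates C l)) (ltrans G y (cap_translates C l)))
    (cap_translates C (map (gmul G x) l ++ map (gmul G y) l)).
Proof.
  intros w [[w1 [H1 ->]] [w2 [H2 E]]] g Hg.
  apply in_app_or in Hg.
  destruct Hg as [Hg|Hg]; apply in_map_iff in Hg; destruct Hg as [g' [<- Hg']].
  - destruct (H1 g' Hg') as [a [Ha ->]]. exists a. split; auto. apply gmulA.
  - rewrite E. destruct (H2 g' Hg') as [a [Ha ->]]. exists a. split; auto. apply gmulA.
Qed.

Lemma tau_iter_cap_translates C Y : lower G Y ->
  forall j n l, 1 <= n ->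
  (forall l', has_distinct (n + j) l' -> Y (cap_translates C l')) ->
  has_distinct n l -> tau_iter j Y (cap_translates C l).
Proof.
  intros HY j. induction j as [|j IH]; intros n l Hn Hcap Hl; simpl.
  - apply Hcap. now rewrite Nat.add_0_r.
  - intros x y Hxy. eapply (tau_iter_lower j Y HY); [apply inter_ltrans_cap_translates|].
    apply (IH (S n)); [lia| |now apply has_distinct_double].
    intros l' Hl'. apply Hcap. now rewrite <- plus_n_Sm.
Qed.

Definition bigcup_list (L : list (G -> Prop)) : G -> Prop :=
  fun z => exists A, In A L /\ A z.

Lemma bigcup_list_mem H : lower G H -> additive G H ->
  forall L, L <> [] -> (forall A, In A L -> H A) -> H (bigcup_list L).
Proof.
  intros Hl Ha L. induction L as [|A [|B r] IH]; intros Hne Hall; [congruence| |].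
  - eapply Hl; [|apply (Hall A (or_introl eq_refl))]. intros z [A' [[<-|[]] Hz]]; auto.
  - eapply Hl; [|apply (Ha A (bigcup_list (B :: r)))].
    + intros z [A' [[<-|Hin] Hz]]; [now left|right]. exists A'; auto.
    + apply Hall. now left.
    + apply IH; [congruence|]. intros; apply Hall; now right.
Qed.

Definition pair_inters (L : list (G -> Prop)) (d : list G) : list (G -> Prop) :=
  flat_map (fun p => map (fun A => inter G (ltrans G (fst p) A) (ltrans G (snd p) A)) L)
    (pairs_lt d).

Lemma cap_translates_subset_pair_inters L d l :
  length L < length d -> incl d l ->
  subset_ G (cap_translates (bigcup_list L) l) (bigcup_list (pair_inters L d)).
Proof.
  intros Hlen Hinc z Hz.
  destruct (pigeonhole_pairs_lt (fun g A => ltrans G g A z) d L Hlen)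
    as [a [b [A [Hab [HA [Ha Hb]]]]]].
  - intros g Hg. destruct (Hz g (Hinc g Hg)) as [w [[A [HA HAw]] ->]].
    exists A. split; auto. exists w. auto.
  - exists (inter G (ltrans G a A) (ltrans G b A)). split; [|split; auto].
    apply in_flat_map. exists (a, b). split; auto. apply in_map_iff. eauto.
Qed.

Lemma length_pair_inters L d : length (pair_inters L d) <= length d * length d * length L.
Proof.
  eapply Nat.le_trans; [apply length_flat_map_le with (c := length L)|].
  - intros p. now rewrite length_map.
  - apply Nat.mul_le_mono_r, length_pairs_lt.
Qed.

Lemma in_pair_inters L d B : NoDup d -> In B (pair_inters L d) ->
  exists a b A, a <> b /\ In A L /\ B = inter G (ltrans G a A) (ltrans G b A).
Proof.
  intros Hnd HB. apply in_flat_map in HB. destruct HB as [[a b] [Hab HB]].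
  apply in_map_iff in HB. destruct HB as [A [<- HA]].
  exists a, b, A. split; [eapply pairs_lt_neq; eauto|auto].
Qed.

Lemma pair_inters_nonempty L d : L <> [] -> 2 <= length d -> pair_inters L d <> [].
Proof.
  intros HL Hd. destruct L as [|A L]; [congruence|].
  destruct d as [|a [|b d]]; simpl in Hd; [lia|lia|]. simpl. discriminate.
Qed.

Lemma tau_iter_finite_cover H : lower G H -> additive G H ->
  forall i K, exists m, forall L X, L <> [] -> length L <= K ->
    (forall A, In A L -> tau_iter i H A) -> subset_ G X (bigcup_list L) ->
    tau_iter m H X.
Proof.
  intros Hl Ha i. induction i as [|i IH]; intros K.
  - exists 0. intros L X HL _ HLH HX. eapply Hl; [apply HX|]. now apply bigcup_list_mem.
  - destruct (IH ((1 + K) * (1 + K) * K)) as [m Hm].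
    exists (K + m). intros L X HL HlenL HLH HX.
    assert (Hcap : forall l, has_distinct (1 + K) l ->
                     tau_iter m H (cap_translates (bigcup_list L) l)).
    { intros l [d [Hnd [Hinc Hd]]]. apply (Hm (pair_inters L d)).
      - apply pair_inters_nonempty; auto. destruct L; simpl in HlenL; [congruence|lia].
      - pose proof (length_pair_inters L d) as Hb. rewrite Hd in Hb.
        eapply Nat.le_trans; [exact Hb|]. now apply Nat.mul_le_mono_l.
      - intros B HB. destruct (in_pair_inters L d B Hnd HB) as [a [b [A [Hab [HA ->]]]]].
        exact (HLH A HA a b Hab).
      - apply cap_translates_subset_pair_inters; [lia|auto]. }
    rewrite tau_iter_add.
    eapply (tau_iter_lower K _ (tau_iter_lower m H Hl));
      [|apply (tau_iter_cap_translates (bigcup_list L) _ (tau_iter_lower m H Hl) K 1 [gone G]); auto].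
    + intros z Hz g [<-|[]]. exists z. split; [now apply HX|]. now rewrite gmul1l.
    + exists [gone G]. split; [repeat constructor; auto|split; [apply incl_refl|auto]].
Qed.

Lemma tau_iter_union H : lower G H -> additive G H ->
  forall n A B, tau_iter n H A -> tau_iter n H B -> exists m, tau_iter m H (union G A B).
Proof.
  intros Hl Ha n A B HA HB. destruct (tau_iter_finite_cover H Hl Ha n 2) as [m Hm].
  exists m. apply (Hm [A; B]); auto.
  - discriminate.
  - intros C [<-|[<-|[]]]; auto.
  - intros z [Hz|Hz]; [exists A|exists B]; simpl; auto.
Qed.

Definition ideal_sandwiched (X : family G) : Prop :=
  exists H n, ideal G H /\ fsubset X (tau_iter n H) /\
    forall m, fsubset (tau_iter m H) (tau_iter m X).

Lemma ideal_sandwiched_ideal H : ideal G H -> ideal_sandwiched H.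
Proof. intro HH. exists H, 0. split; [exact HH|split]; [intros A|intros m A]; auto. Qed.

Lemma ideal_sandwiched_between X Y :
  ideal_sandwiched X -> fsubset X Y -> fsubset Y (tau G X) -> ideal_sandwiched Y.
Proof.
  intros [H [n [HH [HXH HHX]]]] HXY HYX. exists H, (S n). split; [|split]; auto.
  - intros A HA. apply (tau_fsubset X (tau_iter n H) HXH), HYX, HA.
  - intros m A HA. apply (tau_iter_fsubset m X Y HXY), HHX, HA.
Qed.

Lemma ideal_sandwiched_union X A B :
  ideal_sandwiched X -> X A -> X B -> exists m, tau_iter m X (union G A B).
Proof.
  intros [H [n [[Hl Ha] [HXH HHX]]]] HA HB.
  destruct (tau_iter_union H Hl Ha n A B (HXH A HA) (HXH B HB)) as [m Hm].
  exists m. now apply HHX.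
Qed.

Lemma additive_bigcup_fam {I : Type} (D : I -> Prop) (Xs : I -> family G) :
  (forall i j, D i -> D j -> exists k, D k /\ fsubset (Xs i) (Xs k) /\ fsubset (Xs j) (Xs k)) ->
  (forall i, D i -> ideal_sandwiched (Xs i)) ->
  (forall i, D i -> exists j, D j /\ fsubset (tau G (Xs i)) (Xs j)) ->
  additive G (bigcup_fam D Xs).
Proof.
  intros Hdir Hsw Hcof A B [i [Hi HA]] [j [Hj HB]].
  destruct (Hdir i j Hi Hj) as [k [Hk [Hik Hjk]]].
  destruct (ideal_sandwiched_union (Xs k) A B (Hsw k Hk) (Hik A HA) (Hjk B HB)) as [m Hm].
  assert (Hiter : forall m, exists l, D l /\ fsubset (tau_iter m (Xs k)) (Xs l)).
  { induction m0 as [|m0 [l [Hl Hkl]]]; [exists k; split; auto; intros C; auto|].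
    destruct (Hcof l Hl) as [l' [Hl' Hll']]. exists l'. split; auto.
    intros C HC. apply Hll'. eapply tau_fsubset; eauto. }
  destruct (Hiter m) as [l [Hl Hkl]]. exists l. auto.
Qed.

Section Hierarchy.
Variable F : family G.
Hypotheses (HFinv : left_invariant G F) (HFid : ideal G F).
Variables (W : Type) (lt : W -> W -> Prop).
Hypotheses (Htotal : forall u v, lt u v \/ u = v \/ lt v u) (Hwf : well_founded lt).

Local Notation tau_at := (tau_at G F W lt).
Local Notation tau_lt := (tau_lt G F W lt).

Lemma tau_at_lower v : lower G (tau_at v).
Proof.
  induction v as [v IH] using (well_founded_ind Hwf).
  intros A B HAB [Hm HB|Hnm HB].
  - apply tau_at_zero; auto. eapply (proj1 HFid); eauto.
  - apply tau_at_succ; auto. intros x y Hxy. destruct (HB x y Hxy) as [u [Hu Hta]].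
    exists u. split; auto. eapply IH; eauto. apply inter_subset; apply ltrans_subset; auto.
Qed.

Lemma tau_at_left_invariant v : left_invariant G (tau_at v).
Proof.
  intros A z [Hm HA|Hnm HA].
  - apply tau_at_zero; auto.
  - apply tau_at_succ; auto. intros x y Hxy.
    assert (Hn : x ⋅ z <> y ⋅ z) by (intro E; apply Hxy; eapply gmul_cancel_r; eauto).
    destruct (HA _ _ Hn) as [u [Hu Hta]]. exists u. split; auto.
    eapply tau_at_lower; [|exact Hta]. apply inter_subset; apply ltrans_ltrans_subset.
Qed.

Lemma fsubset_tau_at v : fsubset F (tau_at v).
Proof.
  induction v as [v IH] using (well_founded_ind Hwf). intros A HA.
  destruct (classic (minimal W lt v)) as [Hm|Hnm]; [now apply tau_at_zero|].
  apply tau_at_succ; auto. apply not_all_ex_not in Hnm. destruct Hnm as [u Hu].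
  apply NNPP in Hu. intros x y _. exists u. split; auto. apply IH; auto.
  eapply (proj1 HFid); [|apply (HFinv A x HA)]. intros w [a b]; auto.
Qed.

Lemma tau_tau_at_fsubset u v : lt u v -> fsubset (tau G (tau_at u)) (tau_at v).
Proof.
  intros Huv A HA. apply tau_at_succ; [intro Hm; exact (Hm u Huv)|].
  intros x y Hxy. exists u. auto.
Qed.

Lemma tau_at_fsubset u v : lt u v -> fsubset (tau_at u) (tau_at v).
Proof.
  intros Huv A HA. apply (tau_tau_at_fsubset u v Huv).
  apply fsubset_tau; auto using tau_at_lower, tau_at_left_invariant.
Qed.

Lemma tau_at_minimal v : minimal W lt v -> fsubset (tau_at v) F.
Proof. intros Hm A [_ HA|Hnm _]; [auto|contradiction]. Qed.

Lemma tau_at_fsubset_tau_lt v : ~ minimal W lt v -> fsubset (tau_at v) (tau G (tau_lt v)).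
Proof.
  intros Hm A [Hm' _|_ Hp]; [contradiction|].
  intros x y Hxy. destruct (Hp x y Hxy) as [u [Hu Ht]]. exists u; auto.
Qed.

Lemma tau_lt_lower w : lower G (tau_lt w).
Proof. apply (bigcup_fam_lower (fun v => lt v w) tau_at). intros v _; apply tau_at_lower. Qed.

Lemma tau_lt_additive_of_sandwiched w : is_limit lt w ->
  (forall v, lt v w -> ideal_sandwiched (tau_at v)) -> additive G (tau_lt w).
Proof.
  intros Hlim Hsw. apply (additive_bigcup_fam (fun v => lt v w) tau_at); auto.
  - intros u v Hu Hv. destruct (Htotal u v) as [Huv|[<-|Hvu]].
    + exists v. split; [auto|split; [now apply tau_at_fsubset|intros A; auto]].
    + exists u. split; [auto|split; intros A; auto].
    + exists u. split; [auto|split; [intros A; auto|now apply tau_at_fsubset]].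
  - intros u Hu. destruct (Hlim u Hu) as [u' [Huu' Hu'w]].
    exists u'. split; auto. now apply tau_tau_at_fsubset.
Qed.

Lemma tau_at_sandwiched v : ideal_sandwiched (tau_at v).
Proof.
  induction v as [v IH] using (well_founded_ind Hwf).
  destruct (classic (minimal W lt v)) as [Hm|Hnm].
  - apply (ideal_sandwiched_between F); [now apply ideal_sandwiched_ideal|..].
    + apply fsubset_tau_at.
    + intros A HA. apply fsubset_tau; [apply HFid|auto|]. now apply (tau_at_minimal v).
  - destruct (classic (is_limit lt v)) as [Hlim|Hsucc].
    + apply (ideal_sandwiched_between (tau_lt v)).
      * apply ideal_sandwiched_ideal. split; [apply tau_lt_lower|].
        now apply tau_lt_additive_of_sandwiched.
      * intros A [u [Hu HA]]. eapply tau_at_fsubset; eauto.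
      * now apply tau_at_fsubset_tau_lt.
    + apply not_all_ex_not in Hsucc. destruct Hsucc as [p Hp].
      apply imply_to_and in Hp. destruct Hp as [Hpv Hno].
      apply (ideal_sandwiched_between (tau_at p)); [auto|now apply tau_at_fsubset|].
      intros A HA. apply (tau_fsubset (tau_lt v)); [|now apply tau_at_fsubset_tau_lt].
      intros B [u [Hu HB]]. destruct (Htotal u p) as [Hup|[<-|Hpu]]; auto.
      * eapply tau_at_fsubset; eauto.
      * exfalso. apply Hno. eauto.
Qed.

Lemma tau_lt_additive w : is_limit lt w -> additive G (tau_lt w).
Proof. intro Hlim. apply tau_lt_additive_of_sandwiched; auto using tau_at_sandwiched. Qed.

End Hierarchy.

Section Tower.
Variable F : family G.
Hypotheses (HFinv : left_invariant G F) (HF : lower G F).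

Inductive tower : family G -> Prop :=
| tower_base : tower F
| tower_tau X : tower X -> tower (tau G X)
| tower_sup (P : family G -> Prop) : (exists X, P X) -> (forall X, P X -> tower X) ->
    tower (bigcup_fam P (fun X => X)).

Lemma tower_props X : tower X -> lower G X /\ left_invariant G X /\ fsubset F X.
Proof.
  induction 1 as [|X HX [Hl [Hi Hs]]|P [X0 HX0] HP IH].
  - repeat split; auto. intros A; auto.
  - repeat split; auto using tau_lower, tau_left_invariant.
    intros A HA. apply fsubset_tau; auto.
  - repeat split.
    + apply bigcup_fam_lower. intros X HX. apply (IH X HX).
    + apply bigcup_fam_left_invariant. intros X HX. apply (IH X HX).
    + intros A HA. exists X0. split; auto. now apply (IH X0 HX0).
Qed.

Lemma tower_fsubset_tau X : tower X -> fsubset X (tau G X).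
Proof. intro HX. destruct (tower_props X HX) as [? [? _]]. now apply fsubset_tau. Qed.

(* The tower is a chain, by the argument of the Bourbaki-Witt theorem. *)
Definition tower_extremal (c : family G) : Prop :=
  forall x, tower x -> fsubset x c -> ~ fsubset c x -> fsubset (tau G x) c.

Lemma tower_extremal_split c : tower c -> tower_extremal c ->
  forall x, tower x -> fsubset x c \/ fsubset (tau G c) x.
Proof.
  intros Hc He x. induction 1 as [|x Hx IH|P HPne HP IH].
  - left. apply (tower_props c Hc).
  - destruct IH as [IH|IH].
    + destruct (classic (fsubset c x)) as [Hcx|Hcx].
      * right. now apply tau_fsubset.
      * left. now apply He.
    + right. intros A HA. apply (tower_fsubset_tau x Hx). auto.
  - destruct (classic (forall X, P X -> fsubset X c)) as [Hall|Hno].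
    + left. intros A [X [HX HA]]. eapply Hall; eauto.
    + apply not_all_ex_not in Hno. destruct Hno as [X HX].
      apply imply_to_and in HX. destruct HX as [HX Hn].
      destruct (IH X HX) as [H1|H1]; [contradiction|].
      right. intros A HA. exists X. auto.
Qed.

Lemma tower_extremal_all c : tower c -> tower_extremal c.
Proof.
  induction 1 as [|c Hc IH|P HPne HP IH]; intros x Hx Hxc Hcx.
  - exfalso. apply Hcx, (tower_props x Hx).
  - destruct (tower_extremal_split c Hc IH x Hx) as [Hxc'|]; [|contradiction].
    now apply tau_fsubset.
  - destruct (classic (forall X, P X -> fsubset (tau G X) x)) as [Hall|Hno].
    { exfalso. apply Hcx. intros A [X [HX HA]]. apply (Hall X HX).
      now apply (tower_fsubset_tau X (HP X HX)). }
    apply not_all_ex_not in Hno. destruct Hno as [c HPc].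
    apply imply_to_and in HPc. destruct HPc as [HPc Hn].
    destruct (tower_extremal_split c (HP c HPc) (IH c HPc) x Hx) as [Hxc'|]; [|contradiction].
    destruct (classic (fsubset c x)) as [Hcx'|Hcx'].
    + apply not_all_ex_not in Hcx. destruct Hcx as [A HA]. apply imply_to_and in HA.
      destruct HA as [[d [HPd HdA]] HxA].
      destruct (tower_extremal_split c (HP c HPc) (IH c HPc) d (HP d HPd)) as [Hdc|Hcd].
      * exfalso. apply HxA, Hcx', Hdc, HdA.
      * intros B HB. exists d. split; auto. apply Hcd. eapply tau_fsubset; eauto.
    + intros B HB. exists c. split; auto. now apply (IH c HPc x Hx).
Qed.

Lemma tower_total X Y : tower X -> tower Y -> fsubset X Y \/ fsubset (tau G Y) X.
Proof. intros HX HY. exact (tower_extremal_split Y HY (tower_extremal_all Y HY) X HX). Qed.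

Lemma tower_chain X Y : tower X -> tower Y -> fsubset X Y \/ fsubset Y X.
Proof.
  intros HX HY. destruct (tower_total X Y HX HY) as [H|H]; auto.
  right. intros A HA. apply H, (tower_fsubset_tau Y HY), HA.
Qed.

Lemma tower_directed (P : family G -> Prop) : (forall X, P X -> tower X) ->
  forall X Y, P X -> P Y -> exists Z, P Z /\ fsubset X Z /\ fsubset Y Z.
Proof.
  intros HP X Y HX HY. destruct (tower_chain X Y (HP X HX) (HP Y HY)) as [H|H].
  - exists Y. repeat split; auto. intros A; auto.
  - exists X. repeat split; auto. intros A; auto.
Qed.

Section AdditiveTower.
Hypothesis HFadd : additive G F.

Lemma tower_sandwiched X : tower X -> ideal_sandwiched X.
Proof.
  induction 1 as [|X HX IH|P HPne HP IH].
  - now apply ideal_sandwiched_ideal.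
  - apply (ideal_sandwiched_between X); auto using tower_fsubset_tau. intros A; auto.
  - destruct (classic (exists X0, P X0 /\ forall Y, P Y -> fsubset Y X0))
      as [[X0 [HX0 Hmax]]|Hnomax].
    + apply (ideal_sandwiched_between X0); auto.
      * intros A HA. now exists X0.
      * intros A [Y [HY HA]]. apply (tower_fsubset_tau X0 (HP X0 HX0)), (Hmax Y HY), HA.
    + apply ideal_sandwiched_ideal. split.
      * apply bigcup_fam_lower. intros X HX. apply (tower_props X (HP X HX)).
      * apply additive_bigcup_fam; auto using tower_directed.
        intros X HX. apply NNPP. intro Hn. apply Hnomax. exists X. split; auto.
        intros Y HY. destruct (tower_total Y X (HP Y HY) (HP X HX)) as [H|H]; auto.
        exfalso. eauto.
Qed.

Lemma tower_union_additive : additive G (bigcup_fam tower (fun X => X)).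
Proof.
  apply additive_bigcup_fam; auto using tower_directed, tower_sandwiched.
  intros X HX. exists (tau G X). split; [now apply tower_tau|]. intros A; auto.
Qed.

Lemma tower_fsubset_tau_star X : tower X -> fsubset X (tau_star G F).
Proof.
  induction 1 as [|X HX IH|P HPne HP IH].
  - intros A HA T _ _ _ HT. auto.
  - intros A HA T Ti Tl Tc HT. apply Tc. intros x y Hxy. now apply (IH _ (HA x y Hxy)).
  - intros A [X [HX HA]]. now apply (IH X HX).
Qed.

Lemma tau_star_fsubset_tower_union : fsubset (tau_star G F) (bigcup_fam tower (fun X => X)).
Proof.
  set (U := bigcup_fam tower (fun X => X)).
  assert (HU : tower U) by (apply tower_sup; eauto using tower_base).
  destruct (tower_props U HU) as [HUl [HUi _]].
  intros A HA. apply HA; auto.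
  - intros B. split; intro HB.
    + exists (tau G U). split; auto using tower_tau.
    + now apply fsubset_tau.
  - intros B HB. exists F. split; auto using tower_base.
Qed.

Lemma tau_star_additive : additive G (tau_star G F).
Proof.
  intros A B HA HB.
  destruct (tower_union_additive A B (tau_star_fsubset_tower_union A HA)
              (tau_star_fsubset_tower_union B HB)) as [X [HX HAB]].
  exact (tower_fsubset_tau_star X HX _ HAB).
Qed.

End AdditiveTower.
End Tower.

End TorsionFree.
End Group.

Theorem theorem1p2 (G : group) (HG : torsion_free G) (F : family G)
  (HFinv : left_invariant G F) (HFid : ideal G F) :
  (forall (W : Type) (lt : W -> W -> Prop), well_order lt ->
     forall w : W, is_limit lt w -> additive G (tau_lt G F W lt w)) /\
  (left_invariant G (tau_star G F) /\ ideal G (tau_star G F)).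
Proof.
  split.
  - intros W lt [_ [_ [Htotal Hwf]]] w Hlim.
    exact (tau_lt_additive G HG F HFinv HFid W lt Htotal Hwf w Hlim).
  - split; [apply tau_star_left_invariant|].
    split; [apply tau_star_lower|].
    exact (tau_star_additive G HG F HFinv (proj1 HFid) (proj2 HFid)).
Qed.
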